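(* Let $\rho$ be an $N$-qubit density matrix and let $\hat\rho,\hat\rho'$ be two independent Pauli shadows of $\rho$. Then $$\mathrm{Var}\big[\mathrm{Tr}(\hat\rho\hat\rho')\big]\le\mathbb{E}\big[\mathrm{Tr}(\hat\rho\hat\rho')^2\big]\le 8.5^N.$$
   Context: A Pauli shadow of an $N$-qubit state $\rho$ is obtained as follows: for each qubit $i$ choose a basis $\mathcal{B}_i\in\{\mathcal{X},\mathcal{Y},\mathcal{Z}\}$ independently and uniformly at random, measure a fresh copy of $\rho$ with each qubit $i$ in the eigenbasis of the Pauli operator $\mathcal{B}_i$, obtaining outcomes $s_i\in\{\pm\}$ (the post-measurement eigenstate being $|\mathcal{B}_i,s_i\rangle$), and set $\hat\rho=\bigotimes_{i=1}^N\big(3|\mathcal{B}_i,s_i\rangle\langle\mathcal{B}_i,s_i|-\mathbb{I}_2\big)$. Independent shadows use independent bases and independent copies of $\rho$. *)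

(* Complex scalars: an arbitrary numClosedFieldType C
   (e.g. the complex numbers over a real closed field, or algC). *)
From HB Require Import structures.
From mathcomp Require Import all_boot all_order all_algebra.
Set Implicit Arguments. Unset Strict Implicit. Unset Printing Implicit Defensive.
Import Order.TTheory GRing.Theory Num.Theory.
Local Open Scope ring_scope.

Section Shadows.
Variable C : numClosedFieldType.

Definition adj m n (M : 'M[C]_(m, n)) : 'M[C]_(n, m) := map_mx Num.conj (M^T).

Definition density_matrix (N : nat) (rho : 'M[C]_(2 ^ N)) : Prop :=
  [/\ adj rho = rho,
      (forall v : 'cV[C]_(2 ^ N), 0 <= (adj v *m rho *m v) 0 0)
    & \tr rho = 1].

(* Pauli bases: 0 = X, 1 = Y, 2 = Z.  Outcome s : bool, true = +, false = -. *)
Definition sqrt2 : C := sqrtC 2.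

(* eigenvector |B,s> (column vector) of the Pauli operator B with
   eigenvalue (+1 if s else -1) *)
Definition ket (B : 'I_3) (s : bool) : 'cV[C]_2 :=
  let sg : C := if s then 1 else -1 in
  match val B with
  | 0%N => \col_(a < 2) (if val a == 0%N then 1 / sqrt2 else sg / sqrt2)
  | 1%N => \col_(a < 2) (if val a == 0%N then 1 / sqrt2 else sg * 'i / sqrt2)
  | _   => \col_(a < 2) (if val a == 0%N then (if s then 1 else 0)
                                         else (if s then 0 else 1))
  end.

Definition pauli (B : 'I_3) : 'M[C]_2 :=
  match val B with
  | 0%N => \matrix_(a < 2, b < 2) (if val a == val b then 0 else 1)
  | 1%N => \matrix_(a < 2, b < 2)
             (if val a == val b then 0 else if val a == 0%N then - 'i else 'i)
  | _   => \matrix_(a < 2, b < 2)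
             (if val a == val b then (if val a == 0%N then 1 else -1) else 0)
  end.

Definition proj1q (B : 'I_3) (s : bool) : 'M[C]_2 := ket B s *m adj (ket B s).

Definition bit (k : nat) (i : nat) : 'I_2 := inord (odd (i %/ 2 ^ k)).

Definition tens (N : nat) (M : 'I_N -> 'M[C]_2) : 'M[C]_(2 ^ N) :=
  \matrix_(i, j) \prod_(k < N) M k (bit k i) (bit k j).

(* a measurement record: basis choices and outcomes for each qubit *)
Definition record (N : nat) : finType :=
  ({ffun 'I_N -> 'I_3} * {ffun 'I_N -> bool})%type.

(* probability of a record: (1/3)^N (uniform basis choice) times the
   Born probability Tr(rho ⊗_i |B_i,s_i><B_i,s_i|) *)
Definition rec_prob (N : nat) (rho : 'M[C]_(2 ^ N)) (w : record N) : C :=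
  (3%:R ^- N) * \tr (rho *m tens (fun i => proj1q (w.1 i) (w.2 i))).

Definition shadow (N : nat) (w : record N) : 'M[C]_(2 ^ N) :=
  tens (fun i => 3%:R *: proj1q (w.1 i) (w.2 i) - 1%:M).

Definition E2 (N : nat) (rho : 'M[C]_(2 ^ N))
  (f : 'M[C]_(2 ^ N) -> 'M[C]_(2 ^ N) -> C) : C :=
  \sum_(w : record N) \sum_(w' : record N)
     rec_prob rho w * rec_prob rho w' * f (shadow w) (shadow w').

Definition trprod (N : nat) (A B : 'M[C]_(2 ^ N)) : C := \tr (A *m B).

Definition Var2 (N : nat) (rho : 'M[C]_(2 ^ N))
  (f : 'M[C]_(2 ^ N) -> 'M[C]_(2 ^ N) -> C) : C :=
  E2 rho (fun A B => (f A B - E2 rho f) ^+ 2).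

End Shadows.

From mathcomp Require Import all_boot all_order all_algebra.
From mathcomp Require Import ring.
Set Implicit Arguments. Unset Strict Implicit. Unset Printing Implicit Defensive.
Import Order.TTheory GRing.Theory Num.Theory.
Local Open Scope ring_scope.

(* Tr(rho_hat rho_hat') factorises over the qubits into the traces
   tr(sigma sigma') of single-qubit shadows sigma = 3|B,s><B,s| - I.  Since
   |B,s><B,s| = (I + s P_B)/2 and the Pauli matrices satisfy tr P = 0 and
   tr(P_B P_B') = 2 [B = B'], we get tr(sigma sigma') = 1/2 + 9/2 s s' [B = B'],
   i.e. 5, -4 or 1/2.  Hence Tr(rho_hat rho_hat')^2 is at most
   prod_k h(B_k, B'_k) with h = 25 on equal and 1/4 on different bases, a bound
   that no longer depends on the outcomes.  Summing the Born probabilities over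
   the outcomes leaves independent uniform bases, under which this product has
   mean ((3 * 25 + 6 * 1/4) / 9)^N = 8.5^N.  The variance bound is
   Var X = E[X^2] - E[X]^2 for the real random variable X. *)

Lemma bit_val k i : nat_of_ord (bit k i) = odd (i %/ 2 ^ k).
Proof. by rewrite /bit inordK //; case: odd. Qed.

Lemma bitS k i : bit k.+1 i = bit k i./2.
Proof. by rewrite /bit expnS divnMA divn2. Qed.

Lemma bit_inj N (i j : nat) : (i < 2 ^ N)%N -> (j < 2 ^ N)%N ->
  (forall k, (k < N)%N -> bit k i = bit k j) -> i = j.
Proof.
elim: N i j => [|N IH] i j; first by rewrite !ltnS !leqn0 => /eqP-> /eqP->.
rewrite expnSr => ltiN ltjN eq_bits.
have odd_ij : odd i = odd j.
  have /(congr1 (@nat_of_ord 2)) := eq_bits 0%N isT.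
  by rewrite !bit_val !expn0 !divn1; case: (odd i); case: (odd j).
rewrite -[i]odd_double_half -[j]odd_double_half odd_ij (IH i./2 j./2) //.
- by rewrite -divn2 ltn_divLR.
- by rewrite -divn2 ltn_divLR.
by move=> k ltkN; rewrite -!bitS eq_bits.
Qed.

Definition bits N (i : 'I_(2 ^ N)) : {ffun 'I_N -> 'I_2} := [ffun k : 'I_N => bit k i].

Lemma bits_inj N : injective (@bits N).
Proof.
move=> i j /ffunP eq_ij; apply/val_inj/(@bit_inj N); rewrite ?ltn_ord // => k ltkN.
by have := eq_ij (Ordinal ltkN); rewrite !ffunE.
Qed.

Lemma bits_bij N : bijective (@bits N).
Proof. by apply: inj_card_bij (@bits_inj N) _; rewrite card_ffun !card_ord. Qed.

Lemma sum_prod_bits (R : comPzSemiRingType) N (F : 'I_N -> 'I_2 -> R) :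
  \sum_(i < 2 ^ N) \prod_(k < N) F k (bit k i) = \prod_(k < N) \sum_(a < 2) F k a.
Proof.
rewrite bigA_distr_bigA (reindex (@bits N)) /=; last exact/onW_bij/bits_bij.
by apply: eq_bigr => i _; apply: eq_bigr => k _; rewrite ffunE.
Qed.

Section Tensor.
Variable C : numClosedFieldType.

Lemma eq_tens N (M M' : 'I_N -> 'M[C]_2) : (forall k, M k = M' k) -> tens M = tens M'.
Proof.
by move=> eqM; apply/matrixP => i j; rewrite !mxE; apply: eq_bigr => k _; rewrite eqM.
Qed.

Lemma tens_mul N (M M' : 'I_N -> 'M[C]_2) :
  tens M *m tens M' = tens (fun k => M k *m M' k).
Proof.
apply/matrixP => i j; rewrite !mxE.
under eq_bigr do rewrite !mxE -big_split /=.
rewrite (@sum_prod_bits _ N (fun k a => M k (bit k i) a * M' k a (bit k j))).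
by apply: eq_bigr => k _; rewrite mxE.
Qed.

Lemma mxtrace_tens N (M : 'I_N -> 'M[C]_2) : \tr (tens M) = \prod_(k < N) \tr (M k).
Proof.
rewrite /mxtrace; under eq_bigr do rewrite mxE.
exact: (@sum_prod_bits _ N (fun k a => M k a a)).
Qed.

Lemma tens_sum N (T : finType) (M : 'I_N -> T -> 'M[C]_2) :
  \sum_(s : {ffun 'I_N -> T}) tens (fun k => M k (s k)) = tens (fun k => \sum_t M k t).
Proof.
apply/matrixP => i j; rewrite summxE mxE.
under eq_bigr do rewrite mxE.
rewrite -(bigA_distr_bigA (fun k t => M k t (bit k i) (bit k j))).
by apply: eq_bigr => k _; rewrite summxE.
Qed.

Lemma tens1 N : tens (fun _ : 'I_N => 1%:M) = 1%:M :> 'M[C]_(2 ^ N).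
Proof.
apply/matrixP => i j; rewrite !mxE; under eq_bigr do rewrite mxE.
have [<-|neq_ij] := eqVneq i j; first by apply: big1 => k _; rewrite eqxx.
have [k neq_bit] : exists k : 'I_N, bit k i != bit k j.
  apply/existsP; apply: contraNT neq_ij => /existsPn eq_bits.
  apply/eqP/bits_inj/ffunP => k; rewrite !ffunE.
  exact/eqP/negPn/eq_bits.
by rewrite (bigD1 k) //= (negbTE neq_bit) mul0r.
Qed.

Definition ktens N (u : 'I_N -> 'cV[C]_2) : 'cV[C]_(2 ^ N) :=
  \col_i \prod_(k < N) u k (bit k i) 0.

Lemma tens_outer N (u : 'I_N -> 'cV[C]_2) :
  tens (fun k => u k *m adj (u k)) = ktens u *m adj (ktens u).
Proof.
apply/matrixP => i j; rewrite !mxE big_ord1 !mxE rmorph_prod -big_split /=.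
by apply: eq_bigr => k _; rewrite !mxE big_ord1 !mxE.
Qed.

End Tensor.

Section Qubit.
Variable C : numClosedFieldType.

Definition sgn (s : bool) : C := if s then 1 else -1.

Lemma mul_conj_div_sqrt2 (x y : C) :
  (x / sqrt2 C) * (y / sqrt2 C)^* = x * y^* / 2%:R.
Proof.
have sqrt2V_real : (sqrt2 C)^-1 \is Num.real.
  by rewrite rpredV ger0_real // sqrtC_ge0 ler0n.
by rewrite rmorphM /= (CrealP sqrt2V_real) mulrACA -invfM -expr2 sqrtCK.
Qed.

Lemma proj1q_pauli b s : proj1q C b s = 2%:R^-1 *: (1%:M + sgn s *: pauli C b).
Proof.
apply/matrixP => a c; rewrite /proj1q !mxE big_ord1 !mxE /ket /pauli /sgn.
case: b => [[|[|[|b]]] lt_b3] //=; case: s;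
  case: a => [[|[|a]] lt_a2] //=; case: c => [[|[|c]] lt_c2] //=;
  rewrite !mxE /= ?mul_conj_div_sqrt2 ?rmorphM ?rmorphN ?rmorph1 ?rmorph0 ?conjCi //=.
all: rewrite ?conjCi ?mul1r ?mulN1r ?mulrN ?mulNr ?opprK -?expr2 ?sqrCi; by field.
Qed.

Lemma mxtrace_pauli b : \tr (pauli C b) = 0.
Proof.
rewrite /mxtrace !big_ord_recr big_ord0 /pauli.
by case: b => [[|[|[|b]]] lt_b3] //=; rewrite !mxE /= ?add0r ?addrN.
Qed.

Lemma mxtrace_pauli_mul b b' : \tr (pauli C b *m pauli C b') = (b == b')%:R *+ 2.
Proof.
rewrite /mxtrace !big_ord_recr big_ord0 /= !mxE !big_ord_recr !big_ord0 /pauli /=.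
case: b => [[|[|[|b]]] lt_b3] //=; case: b' => [[|[|[|b']]] lt_b'3] //=;
  rewrite !mxE /= ?mulN1r ?mulrN ?mulNr ?opprK -?expr2 ?sqrCi; ring.
Qed.

Lemma sum_proj1q b : \sum_t proj1q C b t = 1%:M.
Proof. by apply/matrixP => a c; rewrite big_bool /= !proj1q_pauli !mxE /sgn; field. Qed.

Definition shadow1 b s : 'M[C]_2 := 3%:R *: proj1q C b s - 1%:M.

Lemma shadow1_pauli b s :
  shadow1 b s = (2%:R^-1)%:M + (3%:R / 2%:R * sgn s) *: pauli C b.
Proof. by apply/matrixP => a c; rewrite /shadow1 proj1q_pauli !mxE; field. Qed.

Lemma mxtrace_shadow1_mul b b' s s' :
  \tr (shadow1 b s *m shadow1 b' s') =
  if b == b' then (if s == s' then 5%:R else - 4%:R) else 2%:R^-1.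
Proof.
rewrite !shadow1_pauli mulmxDl !mulmxDr !mul_scalar_mx mul_mx_scalar.
rewrite -scalemxAl -scalemxAr.
rewrite !mxtraceD !mxtraceZ mxtrace_scalar !mxtrace_pauli mxtrace_pauli_mul /sgn.
by case: (b == b'); case: s; case: s' => /=; field.
Qed.

Definition sq_trace_bound (b b' : 'I_3) : C := if b == b' then 25%:R else 4%:R^-1.

Lemma mxtrace_shadow1_mul_real b b' s s' :
  \tr (shadow1 b s *m shadow1 b' s') \is Num.real.
Proof.
rewrite mxtrace_shadow1_mul.
by case: ifP => _; [case: ifP => _|]; rewrite ?rpredN ?rpredV realn.
Qed.

Lemma sqr_mxtrace_shadow1_mul_le b b' s s' :
  \tr (shadow1 b s *m shadow1 b' s') ^+ 2 <= sq_trace_bound b b'.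
Proof.
rewrite mxtrace_shadow1_mul /sq_trace_bound.
by case: ifP => _; [case: ifP => _|]; rewrite ?sqrrN ?exprVn -natrX ?ler_nat.
Qed.

Lemma sum_sq_trace_bound : \sum_b \sum_b' sq_trace_bound b b' = 9%:R * (17%:R / 2%:R).
Proof. by rewrite /sq_trace_bound !big_ord_recr !big_ord0 /=; field. Qed.

End Qubit.

Lemma variance_le_second_moment (R : numDomainType) (T : finType) (p X : T -> R) :
  (forall t, 0 <= p t) -> \sum_t p t = 1 -> (forall t, X t \is Num.real) ->
  \sum_t p t * (X t - \sum_u p u * X u) ^+ 2 <= \sum_t p t * X t ^+ 2.
Proof.
move=> p_ge0 p_sum1 X_real; set m := \sum_u p u * X u.
have m_real : m \is Num.real.
  by apply: rpred_sum => t _; apply: rpredM; [exact: ger0_real | exact: X_real].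
have -> : \sum_t p t * (X t - m) ^+ 2 = \sum_t p t * X t ^+ 2 - m ^+ 2.
  transitivity (\sum_t (p t * X t ^+ 2 - 2%:R * m * (p t * X t) + m ^+ 2 * p t)).
    by apply: eq_bigr => t _; ring.
  rewrite big_split sumrB /= -!mulr_sumr p_sum1 -/m; ring.
by rewrite lerBlDr lerDl real_exprn_even_ge0.
Qed.

Lemma sum_ffun_prod2 (R : comPzSemiRingType) (I J : finType) N (g : I -> J -> R) :
  \sum_(B : {ffun 'I_N -> I}) \sum_(B' : {ffun 'I_N -> J}) \prod_(k < N) g (B k) (B' k) =
  (\sum_i \sum_j g i j) ^+ N.
Proof.
transitivity (\sum_(B : {ffun 'I_N -> I}) \prod_(k < N) \sum_j g (B k) j).
  by apply: eq_bigr => B _; rewrite bigA_distr_bigA.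
by rewrite -(bigA_distr_bigA (fun _ i => \sum_j g i j)) prodr_const card_ord.
Qed.

Section Shadows.
Variables (C : numClosedFieldType) (N : nat) (rho : 'M[C]_(2 ^ N)).
Hypothesis rho_density : density_matrix rho.

Lemma rec_prob_ge0 w : 0 <= rec_prob rho w.
Proof.
have [_ rho_psd _] := rho_density.
rewrite /rec_prob mulr_ge0 ?invr_ge0 ?exprn_ge0 ?ler0n //.
rewrite (tens_outer (fun k => ket C (w.1 k) (w.2 k))) mulmxA mxtrace_mulC mulmxA.
by rewrite /mxtrace big_ord1.
Qed.

Lemma sum_rec_prob_outcomes B : \sum_s rec_prob rho (B, s) = 3%:R ^- N.
Proof.
have [_ _ rho_tr1] := rho_density.
rewrite /rec_prob -mulr_sumr -raddf_sum -mulmx_sumr /=.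
rewrite (tens_sum (fun k t => proj1q C (B k) t)).
by rewrite (eq_tens (fun k => sum_proj1q C (B k))) tens1 mulmx1 rho_tr1 mulr1.
Qed.

Lemma sum_rec_prob_bases (G : {ffun 'I_N -> 'I_3} -> C) :
  \sum_w rec_prob rho w * G w.1 = 3%:R ^- N * \sum_B G B.
Proof.
transitivity (\sum_B \sum_s rec_prob rho (B, s) * G B).
  by rewrite pair_bigA; apply: eq_bigr => -[].
rewrite mulr_sumr; apply: eq_bigr => B _.
by rewrite -mulr_suml sum_rec_prob_outcomes.
Qed.

Lemma sum_rec_prob : \sum_w rec_prob rho w = 1.
Proof.
have := sum_rec_prob_bases (fun _ => 1); under eq_bigr do rewrite mulr1.
rewrite sumr_const card_ffun !card_ord natrX => ->.
by rewrite mulVf // expf_neq0 // pnatr_eq0.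
Qed.

Lemma sum2_rec_prob_prod (g : 'I_3 -> 'I_3 -> C) :
  \sum_w \sum_w' rec_prob rho w * rec_prob rho w' * \prod_(k < N) g (w.1 k) (w'.1 k) =
  (\sum_b \sum_b' g b b' / 9%:R) ^+ N.
Proof.
under eq_bigr => w _.
  under eq_bigr do rewrite -mulrA.
  rewrite -mulr_sumr.
  rewrite (sum_rec_prob_bases (fun B' : {ffun 'I_N -> 'I_3} => \prod_k g (w.1 k) (B' k))).
  over.
rewrite (sum_rec_prob_bases (fun B : {ffun 'I_N -> 'I_3} =>
  3%:R ^- N * \sum_(B' : {ffun 'I_N -> 'I_3}) \prod_k g (B k) (B' k))).
rewrite -sum_ffun_prod2 mulr_sumr; apply: eq_bigr => B _.
rewrite mulr_sumr mulr_sumr; apply: eq_bigr => B' _.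
by rewrite big_split /= prodr_const card_ord mulrA -invfM -exprMn -natrM mulrC exprVn.
Qed.

Lemma trprod_shadow (w w' : record N) :
  trprod (shadow C w) (shadow C w') =
  \prod_(k < N) \tr (shadow1 C (w.1 k) (w.2 k) *m shadow1 C (w'.1 k) (w'.2 k)).
Proof. by rewrite /trprod /shadow tens_mul mxtrace_tens. Qed.

End Shadows.

Theorem lemma3 (C : numClosedFieldType) (N : nat) (rho : 'M[C]_(2 ^ N)) :
  density_matrix rho ->
  Var2 rho (@trprod C N) <= E2 rho (fun A B => trprod A B ^+ 2) /\
  E2 rho (fun A B => trprod A B ^+ 2) <= (17%:R / 2%:R) ^+ N.
Proof.
move=> rho_density; have p_ge0 := rec_prob_ge0 rho_density.
have trprod_real (w w' : record N) : trprod (shadow C w) (shadow C w') \is Num.real.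
  by rewrite trprod_shadow; apply: rpred_prod => k _; exact: mxtrace_shadow1_mul_real.
split.
  rewrite /Var2 /E2 !pair_bigA /=; apply: variance_le_second_moment => [ww||ww].
  - by rewrite mulr_ge0.
  - rewrite -(pair_bigA _ (fun w w' => rec_prob rho w * rec_prob rho w')) /=.
    under eq_bigr do rewrite -mulr_sumr (sum_rec_prob rho_density) mulr1.
    exact: sum_rec_prob.
  - exact: trprod_real.
apply: (@le_trans _ _ (\sum_w \sum_w' rec_prob rho w * rec_prob rho w' *
                        \prod_(k < N) sq_trace_bound C (w.1 k) (w'.1 k))).
  apply: ler_sum => w _; apply: ler_sum => w' _.
  rewrite trprod_shadow -prodrXl; apply: ler_wpM2l; first exact: mulr_ge0.
  apply: ler_prod => k _; rewrite sqr_mxtrace_shadow1_mul_le andbT.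
  by rewrite real_exprn_even_ge0 ?mxtrace_shadow1_mul_real.
rewrite (sum2_rec_prob_prod rho_density); under eq_bigr do rewrite -mulr_suml.
by rewrite -mulr_suml sum_sq_trace_bound mulrAC divff ?mul1r ?pnatr_eq0.
Qed.
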